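(* Let $\mathcal{B}=\{(1,1,2),(1,2,2),(2,1,1)\}$, let $X^{\mathcal{B}}$ be the corresponding $S_2$-SFT and $F$ its SNRE, which is $a_n=a_{n-1}b_{n-1}+b_{n-1}^2$, $b_n=a_{n-1}^2$, $a_1=2$, $b_1=1$. Then $F$ is of the oscillating type, and $$h(X^{\mathcal{B}})=\frac14\lim_{n\to\infty}\Big(\alpha_1+\sum_{j=1}^{n}2^{-2j}\ln r^{(a)}_{2j-1}\Big),$$ where $\alpha_1=\ln a_1$ and $r^{(a)}_m=1+\frac{b_m}{a_m}+\big(\frac{b_m}{a_m}\big)^2$.
   Context: $S_2$ is the free semigroup on two generators, identified with finite words over $\{1,2\}$ (root $\epsilon$); alphabet $\{1,2\}$. For a basic set $\mathcal{B}\subseteq\{1,2\}^3$ of admissible 2-blocks $(i,i_1,i_2)$, $a_n$ (resp. $b_n$) is the number of maps $u$ from words of length $\le n$ to $\{1,2\}$ with $(u(w),u(w1),u(w2))\in\mathcal{B}$ for all words $w$ of length $\le n-1$ and $u(\epsilon)=1$ (resp. $2$); $|B_n(X^{\mathcal{B}})|=a_n+b_n$. The entropy is $h(X^{\mathcal{B}})=\limsup_{n}\frac{\ln(a_n+b_n)}{2^{n+1}-1}$, where $2^{n+1}-1$ is the number of words of length $\le n$; this limsup is known to be a limit. The SNRE is of oscillating type if there are two infinite subsequences $(n^{(a)}_m)$ and $(n^{(b)}_m)$ of $\mathbb{N}$ such that $a_n\ge b_n$ for $n$ in the first and $a_n<b_n$ for $n$ in the second. *)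

From Stdlib Require Import Reals.
From Coquelicot Require Import Coquelicot.
From mathcomp Require Import all_boot.
Local Open Scope nat_scope.

Set Implicit Arguments.
Unset Strict Implicit.
Unset Printing Implicit Defensive.

(* Symbols: the alphabet {1,2} is encoded by bool: false <-> 1, true <-> 2. *)
Definition sym (b : bool) : nat := if b then 2 else 1.

Definition inB (i i1 i2 : nat) : bool :=
  [|| (i, i1, i2) == (1, 1, 2), (i, i1, i2) == (1, 2, 2) | (i, i1, i2) == (2, 1, 1)].

(* Words of S_2 of length <= n are encoded in heap order: the root epsilon is
   0, and the word w c (c in {1,2}) is 2*idx(w) + c.  This is a bijection
   between words of length <= n and {0, ..., 2^(n+1) - 2}; the words of length
   <= n-1 are exactly the indices < 2^n - 1. *)
Definition nwords (n : nat) : nat := (2 ^ n.+1 - 1)%N.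

Definition lab (N : nat) (u : {ffun 'I_N -> bool}) (k : nat) : bool :=
  match @insub nat (fun k => k < N) _ k with
  | Some i => u i
  | None => false
  end.

Definition admissible (n : nat) (r : bool) (u : {ffun 'I_(nwords n) -> bool}) : bool :=
  (sym (lab u 0) == sym r) &&
  [forall k : 'I_(nwords n),
     (k < 2 ^ n - 1) ==>
       inB (sym (lab u k)) (sym (lab u (2 * k + 1))) (sym (lab u (2 * k + 2)))].

Arguments admissible : clear implicits.

Definition acount (n : nat) : nat := #|[pred u : {ffun 'I_(nwords n) -> bool} | admissible n false u]|.
Definition bcount (n : nat) : nat := #|[pred u : {ffun 'I_(nwords n) -> bool} | admissible n true u]|.

Definition oscillating (a b : nat -> nat) : Prop :=
  (forall N, exists n, (N <= n)%N /\ (b n <= a n)%N) /\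
  (forall N, exists n, (N <= n)%N /\ (a n < b n)%N).

Local Open Scope R_scope.

Definition entropy : Rbar :=
  LimSup_seq (fun n => ln (INR (acount n + bcount n)) / INR (nwords n)).

Definition ra (m : nat) : R :=
  let q := INR (bcount m) / INR (acount m) in 1 + q + q ^ 2.

Fixpoint Ssum (n : nat) : R :=
  match n with
  | O => 0
  | S j => Ssum j + / 2 ^ (2 * S j)%N * ln (ra (2 * S j - 1)%N)
  end.

Definition Spart (n : nat) : R := ln (INR (acount 1)) + Ssum n.

From Stdlib Require Import Reals Lra.
From Coquelicot Require Import Coquelicot.
From mathcomp Require Import all_boot zify.

(* Cutting an admissible pattern at the root leaves the patterns on the two
   subtrees, and this is a bijection onto the pairs of admissible patterns whose
   roots form an admissible block with the root symbol.  Since the root symbol 1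
   forces the right subtree to start with 2 and the root symbol 2 forces both
   subtrees to start with 1, a_{n+1} = (a_n + b_n) b_n and b_{n+1} = a_n^2, with
   a_0 = b_0 = 1.  The two counts swap their order at every step: 2 b_m <= a_m
   gives a_{m+1} < b_{m+1}, which gives 2 b_{m+2} <= a_{m+2}.
   Two steps of the recursion give a_{m+2} = a_m^4 r^(a)_m, so alpha_1 plus the
   m-th partial sum equals ln a_{2m+1} / 4^m; it increases and, since 1 <= r^(a)_m <= 3 when
   b_m <= a_m, it is bounded, with limit L.  Along odd and even n, ln(a_n + b_n)
   is c 4^k (ln a_{2k+1} / 4^k) plus a bounded term, with c = 1 resp. 2, while
   2^{n+1} - 1 is 4 c 4^k - 1; so the entropy sequence converges to L/4. *)

Set Implicit Arguments.
Unset Strict Implicit.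
Unset Printing Implicit Defensive.

Local Open Scope nat_scope.

(** * Heap order on words *)

(* In heap order, [depth k] is the length of the word [w] with index [k], and
   [prepend b k] is the index of the word [(sym b) w]. *)
Definition depth k := trunc_log 2 k.+1.

Definition prepend (b : bool) k := k + sym b * 2 ^ depth k.

Lemma depth_bounds k : 2 ^ depth k <= k.+1 < 2 ^ (depth k).+1.
Proof. by rewrite trunc_logP // trunc_log_ltn. Qed.

Lemma depth_eq k d : 2 ^ d <= k.+1 < 2 ^ d.+1 -> depth k = d.
Proof. exact: trunc_log_eq. Qed.

Lemma ltn_depth k m : (k < 2 ^ m - 1) = (depth k < m).
Proof.
have /andP [lo hi] := depth_bounds k.
case: (ltnP (depth k) m) => [lt_dm | le_md].
  by have := leq_pexp2l (isT : 0 < 2) lt_dm; move: hi; rewrite !expnS; lia.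
by have := leq_pexp2l (isT : 0 < 2) le_md; lia.
Qed.

Lemma depth_prepend b k : depth (prepend b k) = (depth k).+1.
Proof.
apply: depth_eq; have /andP [lo hi] := depth_bounds k.
by move: lo hi; rewrite /prepend !expnS; case: b => /=; lia.
Qed.

Lemma depth_child k c : depth (2 * k + sym c) = (depth k).+1.
Proof.
apply: depth_eq; have /andP [lo hi] := depth_bounds k.
by move: lo hi; rewrite !expnS; case: c => /=; lia.
Qed.

Lemma prepend_child b k c : prepend b (2 * k + sym c) = 2 * prepend b k + sym c.
Proof. by rewrite /prepend depth_child expnS; lia. Qed.

Lemma prepend0 b : prepend b 0 = sym b.
Proof. by rewrite /prepend (@depth_eq 0 0) // muln1. Qed.

Lemma prepend_gt0 b k : 0 < prepend b k.
Proof. by rewrite /prepend; case: b => /=; lia. Qed.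

Lemma ltn_prepend b k m : (prepend b k < 2 ^ m.+1 - 1) = (k < 2 ^ m - 1).
Proof. by rewrite !ltn_depth depth_prepend. Qed.

Lemma prepend_inj b b' j j' : prepend b j = prepend b' j' -> b = b' /\ j = j'.
Proof.
move=> E; have Ed : depth j = depth j'.
  by apply/eq_add_S; rewrite -(depth_prepend b) -(depth_prepend b') E.
have /andP [lo hi] := depth_bounds j; have /andP [lo' hi'] := depth_bounds j'.
move: E lo hi lo' hi'; rewrite /prepend -Ed !expnS.
by case: b; case: b' => /= *; try split => //; lia.
Qed.

Lemma prependP k : 0 < k -> exists b j, prepend b j = k.
Proof.
move=> k_gt0; have /andP [lo hi] := depth_bounds k.
case Ed : (depth k) lo hi => [|d] lo hi; first by rewrite expn1 in hi; lia.
have := expn_gt0 2 d; move: lo hi; rewrite !expnS => lo hi d_gt0.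
case: (ltnP k.+1 (3 * 2 ^ d)) => split_k.
  exists false, (k - 2 ^ d); rewrite /prepend.
  by rewrite (@depth_eq _ d) /=; rewrite ?expnS; lia.
exists true, (k - 2 * 2 ^ d); rewrite /prepend.
by rewrite (@depth_eq _ d) /=; rewrite ?expnS; lia.
Qed.

(** * Admissible patterns and their counts *)

Section BlockAdmissibility.

Variable blk : nat -> nat -> nat -> bool.

Definition adm_fun n r (f : nat -> bool) : Prop :=
  f 0 = r /\
  forall k, k < 2 ^ n - 1 -> blk (sym (f k)) (sym (f (2 * k + 1))) (sym (f (2 * k + 2))).

Lemma eq_adm_fun n r f g : f =1 g -> adm_fun n r f <-> adm_fun n r g.
Proof.
by move=> fg; rewrite /adm_fun; split=> -[f0 fk]; split=> [|k /fk]; rewrite ?fg // -?fg.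
Qed.

Lemma adm_funS n r f :
  adm_fun n.+1 r f <->
  [/\ f 0 = r, blk (sym r) (sym (f 1)) (sym (f 2)),
      adm_fun n (f 1) (f \o prepend false) & adm_fun n (f 2) (f \o prepend true)].
Proof.
split.
  move=> [f0 fk]; have root_blk : blk (sym r) (sym (f 1)) (sym (f 2)).
    by rewrite -f0; apply: (fk 0); have := expn_gt0 2 n; rewrite expnS; lia.
  have subtree b : adm_fun n (f (sym b)) (f \o prepend b).
    split=> [|k k_lt]; first by rewrite /= prepend0.
    rewrite /= -[2 * k + 1]/(2 * k + sym false) -[2 * k + 2]/(2 * k + sym true).
    by rewrite !prepend_child; apply: fk; rewrite ltn_prepend.
  by split=> //; [apply: (subtree false) | apply: (subtree true)].
move=> [f0 root_blk [_ f1k] [_ f2k]]; split=> // k k_lt.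
have [->|k_gt0] := posnP k; first by rewrite f0.
move: k_lt; have [b [j <-]] := prependP k_gt0; rewrite ltn_prepend => j_lt.
rewrite -[2 * _ + 1]/(2 * _ + sym false) -[2 * _ + 2]/(2 * _ + sym true) -!prepend_child.
by case: b; [apply: f2k | apply: f1k].
Qed.

End BlockAdmissibility.

Notation pattern n := {ffun 'I_(nwords n) -> bool}.

Lemma labE N (u : {ffun 'I_N -> bool}) (i : 'I_N) : lab u i = u i.
Proof. by rewrite /lab; case: insubP => [j _ /val_inj -> | /negP[]]. Qed.

Lemma labN N (u : {ffun 'I_N -> bool}) k : N <= k -> lab u k = false.
Proof. by rewrite /lab; case: insubP => // j; rewrite ltnNge => /negP. Qed.

Lemma sym_inj : injective sym. Proof. by case; case. Qed.

Lemma admissibleP n r (u : pattern n) :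
  reflect (adm_fun inB n r (lab u)) (admissible n r u).
Proof.
apply: (iffP andP) => [[/eqP/sym_inj u0 /forallP uk] | [u0 uk]]; split=> //.
- move=> k k_lt; have k_ord : k < nwords n by rewrite /nwords expnS; lia.
  by have := uk (Ordinal k_ord); rewrite /= k_lt.
- by rewrite u0.
- by apply/forallP => k; apply/implyP/uk.
Qed.

Lemma adm_root n r (u : pattern n) : admissible n r u -> lab u 0 = r.
Proof. by case/admissibleP. Qed.

Definition child n b (u : pattern n.+1) : pattern n :=
  [ffun j : 'I_(nwords n) => lab u (prepend b j)].

Lemma lab_child n b (u : pattern n.+1) : lab (child b u) =1 lab u \o prepend b.
Proof.
move=> j /=; case: (ltnP j (nwords n)) => j_lt; first by rewrite (labE _ (Ordinal j_lt)) ffunE.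
by rewrite !labN // leqNgt /nwords ltn_prepend -leqNgt.
Qed.

Lemma admissibleS n r (u : pattern n.+1) :
  admissible n.+1 r u <->
  [/\ lab u 0 = r, inB (sym r) (sym (lab (child false u) 0)) (sym (lab (child true u) 0)),
      admissible n (lab (child false u) 0) (child false u) &
      admissible n (lab (child true u) 0) (child true u)].
Proof.
have adm_child b : admissible n (lab u (sym b)) (child b u) <->
                   adm_fun inB n (lab u (sym b)) (lab u \o prepend b).
  by rewrite -(eq_adm_fun _ _ _ (lab_child b u)); split => /admissibleP.
rewrite !lab_child /= !prepend0.
split=> [/admissibleP/adm_funS [u0 root_blk adm1 adm2] | [u0 root_blk adm1 adm2]].
  by split=> //; [apply/(adm_child false) | apply/(adm_child true)].
by apply/admissibleP/adm_funS; split=> //; [apply/(adm_child false) | apply/(adm_child true)].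
Qed.

Definition adm_set n r := [set u : pattern n | admissible n r u].

Definition adm_pairs n r := [set p : pattern n * pattern n |
  [&& inB (sym r) (sym (lab p.1 0)) (sym (lab p.2 0)),
      admissible n (lab p.1 0) p.1 & admissible n (lab p.2 0) p.2]].

Definition children n (u : pattern n.+1) := (child false u, child true u).

Definition graft n r (p : pattern n * pattern n) : pattern n.+1 :=
  [ffun i : 'I_(nwords n.+1) => if val i == 0 then r else
     if [pick j : 'I_(nwords n) | prepend false j == i] is Some j then p.1 j else
     if [pick j : 'I_(nwords n) | prepend true j == i] is Some j then p.2 j else false].

Lemma lab_graft0 n r p : lab (@graft n r p) 0 = r.
Proof.
have root_ord : 0 < nwords n.+1 by rewrite /nwords expnS; have := expn_gt0 2 n.+1; lia.
by rewrite (labE _ (Ordinal root_ord)) ffunE.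
Qed.

Lemma child_graft n r p b : child b (@graft n r p) = if b then p.2 else p.1.
Proof.
apply/ffunP => j; have j_ord : prepend b j < nwords n.+1 by rewrite /nwords ltn_prepend.
rewrite ffunE (labE _ (Ordinal j_ord)) ffunE /= eqn0Ngt prepend_gt0 /= {j_ord}.
case: pickP => [j' /eqP/prepend_inj [<- /val_inj ->] // | no_false].
case: b no_false => no_false; last by have := no_false j; rewrite eqxx.
case: pickP => [j' /eqP/prepend_inj [_ /val_inj ->] // | no_true].
by have := no_true j; rewrite eqxx.
Qed.

Lemma children_inj n r : {in adm_set n.+1 r &, injective (@children n)}.
Proof.
move=> u v; rewrite !inE => /adm_root u0 /adm_root v0 [uv1 uv2].
apply/ffunP => i; rewrite -!labE.
have [->|i_gt0] := posnP i; first by rewrite u0 v0.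
have [b [j <-]] := prependP i_gt0.
by rewrite -[lab u _]/((lab u \o prepend b) j) -[lab v _]/((lab v \o prepend b) j)
  -!lab_child; case: b; [rewrite uv2 | rewrite uv1].
Qed.

Lemma children_adm_set n r : @children n @: adm_set n.+1 r = adm_pairs n r.
Proof.
apply/setP => p; rewrite inE; apply/imsetP/and3P.
  by move=> [u]; rewrite inE => /admissibleS [_ root_blk adm1 adm2] ->.
move=> [root_blk adm1 adm2]; exists (graft r p).
  by rewrite inE; apply/admissibleS; rewrite !child_graft lab_graft0.
by rewrite /children !child_graft; case: p {root_blk adm1 adm2}.
Qed.

Lemma card_adm_setS n r : #|adm_set n.+1 r| = #|adm_pairs n r|.
Proof. by rewrite -children_adm_set card_in_imset //; apply: children_inj. Qed.

Lemma adm_pairs1 n :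
  adm_pairs n false = setX (adm_set n false :|: adm_set n true) (adm_set n true).
Proof.
apply/setP => -[v w]; rewrite !inE /=; apply/and3P/andP => [[root_blk adm_v adm_w] | []].
  have w0 : lab w 0 = true by move: root_blk; case: (lab v 0); case: (lab w 0).
  rewrite w0 in adm_w; split=> //.
  by case: (lab v 0) adm_v => adm_v; rewrite adm_v ?orbT.
move=> adm_v adm_w; rewrite (adm_root adm_w) adm_w.
by case/orP: adm_v => adm_v; rewrite (adm_root adm_v) adm_v.
Qed.

Lemma adm_pairs2 n : adm_pairs n true = setX (adm_set n false) (adm_set n false).
Proof.
apply/setP => -[v w]; rewrite !inE /=; apply/and3P/andP => [[] | [adm_v adm_w]].
  by case: (lab v 0); case: (lab w 0).
by rewrite (adm_root adm_v) (adm_root adm_w) adm_v adm_w.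
Qed.

Lemma card_adm_setU n :
  #|adm_set n false :|: adm_set n true| = #|adm_set n false| + #|adm_set n true|.
Proof.
rewrite cardsU; suff -> : adm_set n false :&: adm_set n true = set0 by rewrite cards0 subn0.
apply/setP => v; rewrite !inE.
by apply/negbTE/negP => /andP [/adm_root v0 /adm_root]; rewrite v0.
Qed.

Lemma adm_set0 r : adm_set 0 r = [set [ffun => r]].
Proof.
have root_ord : 0 < nwords 0 by [].
apply/setP => u; rewrite !inE; apply/idP/eqP => [/adm_root u0 | ->].
  apply/ffunP => i; rewrite ffunE -u0 (labE u (Ordinal root_ord)).
  by congr (u _); apply/val_inj; case: i => -[].
by apply/admissibleP; split=> [|k]; rewrite ?(labE _ (Ordinal root_ord)) ?ffunE.
Qed.

Lemma acountE n : acount n = #|adm_set n false|.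
Proof. by apply: eq_card => u; rewrite !inE. Qed.

Lemma bcountE n : bcount n = #|adm_set n true|.
Proof. by apply: eq_card => u; rewrite !inE. Qed.

Lemma acount0 : acount 0 = 1.
Proof. by rewrite acountE adm_set0 cards1. Qed.

Lemma bcount0 : bcount 0 = 1.
Proof. by rewrite bcountE adm_set0 cards1. Qed.

Lemma acountS n : acount n.+1 = (acount n + bcount n) * bcount n.
Proof. by rewrite !acountE bcountE card_adm_setS adm_pairs1 cardsX card_adm_setU. Qed.

Lemma bcountS n : bcount n.+1 = acount n * acount n.
Proof. by rewrite acountE bcountE card_adm_setS adm_pairs2 cardsX. Qed.

Lemma counts_gt0 n : 0 < acount n /\ 0 < bcount n.
Proof.
elim: n => [|n [a_gt0 b_gt0]]; first by rewrite acount0 bcount0.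
by rewrite acountS bcountS; split; nia.
Qed.

Lemma acountS_lt m : 2 * bcount m <= acount m -> acount m.+1 < bcount m.+1.
Proof. by rewrite acountS bcountS; have [? ?] := counts_gt0 m; nia. Qed.

Lemma bcountS_le m : acount m < bcount m -> 2 * bcount m.+1 <= acount m.+1.
Proof. by rewrite acountS bcountS; nia. Qed.

Lemma counts_alternate k :
  2 * bcount (2 * k + 1) <= acount (2 * k + 1) /\ acount (2 * k + 2) < bcount (2 * k + 2).
Proof.
have odd_even m : 2 * bcount m <= acount m -> 2 * bcount m.+2 <= acount m.+2.
  by move/acountS_lt/bcountS_le.
suff odd_k : 2 * bcount (2 * k + 1) <= acount (2 * k + 1).
  have -> : 2 * k + 2 = (2 * k + 1).+1 by lia.
  by split=> //; apply: acountS_lt.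
elim: k => [|k]; first by rewrite acountS bcountS acount0 bcount0.
by move/odd_even; have -> : 2 * k.+1 + 1 = (2 * k + 1).+2 by lia.
Qed.

Lemma oscillating_counts : oscillating acount bcount.
Proof.
split=> N.
  by exists (2 * N + 1); have [le_ba _] := counts_alternate N; split=> //; lia.
by exists (2 * N + 2); have [_ lt_ab] := counts_alternate N; split=> //; lia.
Qed.

(** * Entropy *)

Local Open Scope R_scope.

Lemma is_lim_seq_odd_even (u : nat -> R) (l : R) :
  is_lim_seq (fun k => u (2 * k + 1)%N) l -> is_lim_seq (fun k => u (2 * k + 2)%N) l ->
  is_lim_seq u l.
Proof.
move=> /is_lim_seq_spec odd_l /is_lim_seq_spec even_l; apply/is_lim_seq_spec => eps.
have [N1 odd_N1] := odd_l eps; have [N2 even_N2] := even_l eps.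
exists (2 * (N1 + N2) + 1)%N => n /leP n_ge.
have [k [k_ge [->|->]]] : exists k, (N1 + N2 <= k)%N /\ (n = 2 * k + 1 \/ n = 2 * k + 2)%N.
  by exists ((n - 1) %/ 2)%N; split; lia.
- by apply: odd_N1; apply/leP; lia.
- by apply: even_N2; apply/leP; lia.
Qed.

Lemma is_lim_seq_affine_ratio (q L M : R) (x t d : nat -> R) :
  1 < q -> is_lim_seq x L -> (forall k, Rabs (t k) <= M) ->
  (forall k, 1 <= d k) -> is_lim_seq d p_infty ->
  is_lim_seq (fun k => (d k * x k + t k) / (q * d k - 1)) (L / q).
Proof.
move=> q_gt1 x_L t_bd d_ge1 d_infty.
have inv_d : is_lim_seq (fun k => / d k) 0 by apply: (is_lim_seq_inv _ _ d_infty).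
have t_d : is_lim_seq (fun k => t k * / d k) 0.
  apply/is_lim_seq_abs_0/(is_lim_seq_le_le (fun _ => 0) _ (fun k => M * / d k)).
  - move=> k; rewrite Rabs_mult Rabs_inv (Rabs_pos_eq (d k)); last by have := d_ge1 k; lra.
    have inv_d_gt0 : 0 < / d k by apply: Rinv_0_lt_compat; have := d_ge1 k; lra.
    by have := Rabs_pos (t k); have := t_bd k; split; nra.
  - exact: is_lim_seq_const.
  - by have := is_lim_seq_mult' _ _ _ _ (is_lim_seq_const M) inv_d; rewrite Rmult_0_r.
have := is_lim_seq_div' _ _ _ _ (is_lim_seq_plus' _ _ _ _ x_L t_d)
  (is_lim_seq_minus' _ _ _ _ (is_lim_seq_const q) inv_d) ltac:(lra).
rewrite Rplus_0_r Rminus_0_r => lim; apply: (is_lim_seq_ext _ _ _ _ lim) => k.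
by have d_ge1k := d_ge1 k; field; split; nra.
Qed.

Lemma acount_gt0 m : 0 < INR (acount m).
Proof. by apply/lt_0_INR/ltP; case: (counts_gt0 m). Qed.

Lemma bcount_gt0 m : 0 < INR (bcount m).
Proof. by apply/lt_0_INR/ltP; case: (counts_gt0 m). Qed.

Lemma ra_ge1 m : 1 <= ra m.
Proof.
have : 0 <= INR (bcount m) / INR (acount m).
  by apply: Rdiv_le_0_compat; [apply: pos_INR | apply: acount_gt0].
by rewrite /ra; nra.
Qed.

Lemma ra_le3 m : (bcount m <= acount m)%N -> ra m <= 3.
Proof.
move=> /leP/le_INR le_ba; have a_gt0 := acount_gt0 m; have b_gt0 := bcount_gt0 m.
have ratio_le1 : INR (bcount m) / INR (acount m) <= 1.
  by apply/Rle_div_l => //; lra.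
have : 0 <= INR (bcount m) / INR (acount m) by apply: Rdiv_le_0_compat; lra.
by rewrite /ra; nra.
Qed.

Lemma counts_sumS m : INR (acount m.+1 + bcount m.+1) = INR (acount m) ^ 2 * ra m.
Proof.
rewrite acountS bcountS /ra -!multE -!plusE !plus_INR !mult_INR !plus_INR.
by have a_gt0 := acount_gt0 m; field; lra.
Qed.

Lemma acountSS m : INR (acount m.+2) = INR (acount m) ^ 4 * ra m.
Proof.
rewrite acountS -multE mult_INR counts_sumS bcountS -multE mult_INR; ring.
Qed.

Lemma ln_ra_odd k : 0 <= ln (ra (2 * k + 1)) <= ln 3.
Proof.
have ra1 := ra_ge1 (2 * k + 1); have [le_ba _] := counts_alternate k.
have ra3 : ra (2 * k + 1) <= 3 by apply: ra_le3; lia.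
by rewrite -ln_1; split; apply: ln_le; lra.
Qed.

Lemma pow2_double n : 2 ^ (2 * n) = 4 ^ n.
Proof. by rewrite -multE pow_mult; congr (_ ^ _); ring. Qed.

Lemma SpartS k : Spart k.+1 = Spart k + ln (ra (2 * k + 1)) / 4 ^ k.+1.
Proof.
rewrite /Spart -[Ssum k.+1]/(Ssum k + / 2 ^ (2 * k.+1)%N * ln (ra (2 * k.+1 - 1)%N)).
rewrite pow2_double (_ : (2 * k.+1 - 1 = 2 * k + 1)%N); last lia.
by rewrite /Rdiv; ring.
Qed.

Lemma Spart_acount k : Spart k = ln (INR (acount (2 * k + 1))) / 4 ^ k.
Proof.
elim: k => [|k IHk]; first by rewrite /Spart /= Rplus_0_r Rdiv_1_r.
rewrite SpartS IHk (_ : (2 * k.+1 + 1 = (2 * k + 1).+2)%N); last lia.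
have a_gt0 := acount_gt0 (2 * k + 1); have ra1 := ra_ge1 (2 * k + 1).
rewrite acountSS ln_mult ?ln_pow; [| done | exact: pow_lt | lra].
rewrite (_ : INR 4 = 4); last by rewrite /=; ring.
by rewrite -tech_pow_Rmult; field; apply: pow_nonzero; lra.
Qed.

Lemma Spart_le k : Spart k + ln 3 / (3 * 4 ^ k) <= Spart 0 + ln 3 / 3.
Proof.
elim: k => [|k IHk]; first by rewrite Rmult_1_r; lra.
have pow_gt0 : 0 < 4 ^ k by apply: pow_lt; lra.
have [_ ln_ra3] := ln_ra_odd k.
suff : ln (ra (2 * k + 1)) / 4 ^ k.+1 <= ln 3 / (3 * 4 ^ k) - ln 3 / (3 * 4 ^ k.+1).
  by rewrite SpartS; lra.
rewrite /= (_ : ln 3 / (3 * 4 ^ k) - ln 3 / (3 * (4 * 4 ^ k)) = ln 3 / (4 * 4 ^ k)); last first.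
  by field; lra.
by apply: Rmult_le_compat_r => //; apply/Rlt_le/Rinv_0_lt_compat; lra.
Qed.

Lemma Spart_incr k : Spart k <= Spart k.+1.
Proof.
have [ln_ra0 _] := ln_ra_odd k.
have : 0 <= ln (ra (2 * k + 1)) / 4 ^ k.+1 by apply: Rdiv_le_0_compat => //; apply: pow_lt; lra.
by rewrite SpartS; lra.
Qed.

Lemma Spart_cvg : exists L : R, is_lim_seq Spart L.
Proof.
have ln3_ge0 : 0 <= ln 3 by rewrite -ln_1; apply: ln_le; lra.
have [L lim_L] : ex_finite_lim_seq Spart.
  apply: (ex_finite_lim_seq_incr _ (Spart 0 + ln 3 / 3)) => [|k]; first exact: Spart_incr.
  have : 0 <= ln 3 / (3 * 4 ^ k) by apply: Rdiv_le_0_compat => //; have := pow_lt 4 k; lra.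
  by have := Spart_le k; lra.
by exists L.
Qed.

Definition entropy_seq n := ln (INR (acount n + bcount n)) / INR (nwords n).

Lemma INR_nwords n : INR (nwords n) = 2 * 2 ^ n - 1.
Proof.
have INR_expn2 m : INR (2 ^ m)%N = 2 ^ m.
  by elim: m => [|m IHm] //; rewrite expnS -multE mult_INR IHm /=; ring.
rewrite /nwords -minusE minus_INR; last by apply/leP; rewrite expn_gt0.
by rewrite INR_expn2 /=; ring.
Qed.

Lemma INR_nwords_odd k : INR (nwords (2 * k + 1)) = 4 * 4 ^ k - 1.
Proof. by rewrite INR_nwords -plusE pow_add pow2_double /=; ring. Qed.

Lemma INR_nwords_even k : INR (nwords (2 * k + 2)) = 4 * (2 * 4 ^ k) - 1.
Proof. by rewrite INR_nwords -plusE pow_add pow2_double /=; ring. Qed.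

Lemma entropy_seq_odd k :
  entropy_seq (2 * k + 1) =
  (4 ^ k * Spart k + ln (INR (acount (2 * k + 1) + bcount (2 * k + 1)) / INR (acount (2 * k + 1))))
  / (4 * 4 ^ k - 1).
Proof.
have a_gt0 := acount_gt0 (2 * k + 1); have b_gt0 := bcount_gt0 (2 * k + 1).
have pow_ge1 : 1 <= 4 ^ k by apply: pow_R1_Rle; lra.
rewrite /entropy_seq INR_nwords_odd Spart_acount ln_div ?plus_INR; try lra.
by field; lra.
Qed.

Lemma entropy_seq_even k :
  entropy_seq (2 * k + 2) = (2 * 4 ^ k * Spart k + ln (ra (2 * k + 1))) / (4 * (2 * 4 ^ k) - 1).
Proof.
have a_gt0 := acount_gt0 (2 * k + 1); have ra1 := ra_ge1 (2 * k + 1).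
have pow_ge1 : 1 <= 4 ^ k by apply: pow_R1_Rle; lra.
rewrite /entropy_seq INR_nwords_even Spart_acount (_ : (2 * k + 2 = (2 * k + 1).+1)%N); last lia.
rewrite counts_sumS ln_mult ?ln_pow; try (exact: pow_lt || lra).
by rewrite (_ : INR 2 = 2) //; field; lra.
Qed.

Lemma entropy_seq_cvg (L : R) : is_lim_seq Spart L -> is_lim_seq entropy_seq (L / 4).
Proof.
move=> Spart_L; have pow_ge1 k : 1 <= 4 ^ k by apply: pow_R1_Rle; lra.
have pow_infty : is_lim_seq (pow 4) p_infty by apply: is_lim_seq_geom_p; lra.
apply: is_lim_seq_odd_even.
  apply: (is_lim_seq_ext _ _ _ (fun k => esym (entropy_seq_odd k))).
  apply: (is_lim_seq_affine_ratio (M := ln 3)) => // [|k]; first lra.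
  set m := (2 * k + 1)%N; have a_gt0 := acount_gt0 m; have b_gt0 := bcount_gt0 m.
  have le_ba : INR (bcount m) <= INR (acount m).
    by apply/le_INR/leP; have [le_ba _] := counts_alternate k; rewrite /m; lia.
  have ratio : 1 <= (INR (acount m) + INR (bcount m)) / INR (acount m) <= 3.
    by split; [apply/(Rle_div_r _ _ _ a_gt0) | apply/(Rle_div_l _ _ _ a_gt0)]; lra.
  rewrite plus_INR Rabs_pos_eq; last by rewrite -ln_1; apply: ln_le; lra.
  by apply: ln_le; lra.
apply: (is_lim_seq_ext _ _ _ (fun k => esym (entropy_seq_even k))).
apply: (is_lim_seq_affine_ratio (M := ln 3)) => [||k|k|] //.
- lra.
- by have [? ?] := ln_ra_odd k; rewrite Rabs_pos_eq.
- by have := pow_ge1 k; lra.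
- apply: (is_lim_seq_le_p_loc _ _ _ pow_infty).
  by exists 0%N => k _; have := pow_ge1 k; lra.
Qed.

Theorem proposition5 :
  oscillating acount bcount /\
  exists L : R, is_lim_seq Spart (Rbar.Finite L) /\ entropy = Rbar.Finite (Rdiv L (INR 4)).
Proof.
split; first exact: oscillating_counts.
have [L Spart_L] := Spart_cvg; exists L; split=> //.
rewrite (_ : INR 4 = 4); last by rewrite /=; ring.
exact/is_LimSup_seq_unique/is_lim_LimSup_seq/entropy_seq_cvg.
Qed.
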